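(* For all integers $\ell\ge 3$ and $n\ge 1$, $$\ell n-2\ell-1\le f_\ell(n,1)\le \ell n-\ell+1.$$
   Context: $f_\ell(n,1)$ denotes the clique number of the xor-product of $\ell$ copies of the complete graph $K_n$. The xor-product $G\cdot H$ of graphs $G,H$ has vertex set $V(G)\times V(H)$, and $(g,h)$, $(g',h')$ are adjacent iff exactly one of the following holds: $gg'\in E(G)$, $hh'\in E(H)$; the xor-product of several graphs is formed iteratively (the operation is associative: two tuples are adjacent iff they are adjacent in an odd number of coordinates). *)

From mathcomp Require Import all_boot all_order all_algebra.
Set Implicit Arguments. Unset Strict Implicit. Unset Printing Implicit Defensive.

(* Vertices of the xor-product of l copies of K_n: l-tuples over 'I_n,
   represented as finite functions 'I_l -> 'I_n. *)
Definition xvert (l n : nat) := {ffun 'I_l -> 'I_n}.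

Definition xadj (l n : nat) (x y : xvert l n) : bool :=
  odd #|[set i : 'I_l | x i != y i]|.

Definition is_xclique (l n : nat) (S : {set xvert l n}) : bool :=
  [forall x in S, forall y in S, (x != y) ==> xadj x y].

(* f_l(n,1): the clique number of the xor-product of l copies of K_n. *)
Definition f_xor (l n : nat) : nat :=
  \max_(S : {set xvert l n} | is_xclique S) #|S|.

From mathcomp Require Import all_boot all_order all_algebra.
From mathcomp Require Import zify.
Import GRing.Theory Num.Theory.

(* Upper bound: over F_2 the matrix ((hamming x y + 1) mod 2)_(x, y in S) of a
   clique S is the identity, and it factors through l(n-1)+1 dimensions, because
   each indicator [x_i = y_i] is a sum of n-1 rank-one terms plus a term that
   depends on y only, and these last terms merge over all coordinates.
   Lower bound: for odd L the vectors [spike i a] (value a >= 2 at coordinate i,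
   binary pattern odd i (+) (i < k) elsewhere) are pairwise at odd distance,
   which gives L(n-2) vertices.  For even l = 3 + m, the spikes on the first 3
   coordinates (padded by a fixed spike on the last m) and the spikes on the last
   m coordinates (padded by [tick], which is at even distance from every spike on
   3 coordinates) form one clique once the padding spike itself is removed. *)

Set Implicit Arguments. Unset Strict Implicit. Unset Printing Implicit Defensive.

Lemma sum_option (R : nmodType) (T : finType) (F : option T -> R) :
  (\sum_(c : option T) F c = F None + \sum_(t : T) F (Some t))%R.
Proof.
rewrite (bigD1 None) //=; congr (_ + _)%R.
rewrite (reindex_omap Some id) //=; last by case.
by apply: eq_bigl => t; rewrite eqxx.
Qed.

Section Biorthogonal.

Local Open Scope ring_scope.

Lemma card_le_biorthogonal (F : fieldType) (T C : finType) (D : {set T})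
    (u : T -> C -> F) (v : C -> T -> F) :
  {in D &, forall x y, \sum_c u x c * v c y = (x == y)%:R} -> (#|D| <= #|C|)%N.
Proof.
move=> uv.
pose U : 'M[F]_(#|D|, #|C|) := \matrix_(r, c) u (enum_val r) (enum_val c).
pose V : 'M[F]_(#|C|, #|D|) := \matrix_(c, r) v (enum_val c) (enum_val r).
have UV : U *m V = 1%:M.
  apply/matrixP => r s; rewrite !mxE.
  under eq_bigr do rewrite !mxE.
  rewrite -(big_enum_val (fun c => u (enum_val r) c * v c (enum_val s))) /=.
  by rewrite uv ?enum_valP // (inj_eq enum_val_inj).
have := mxrankM_maxl U V; rewrite UV mxrank1 => /leq_trans; apply.
exact: rank_leq_col.
Qed.

End Biorthogonal.

Definition hamming (l n : nat) (x y : xvert l n) := #|[set i | x i != y i]|.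

Lemma hamming_xx (l n : nat) (x : xvert l n) : hamming x x = 0.
Proof. by apply: eq_card0 => i; rewrite !inE eqxx. Qed.

Lemma hamming_sym (l n : nat) (x y : xvert l n) : hamming x y = hamming y x.
Proof. by apply: eq_card => i; rewrite !inE eq_sym. Qed.

Lemma xcliqueP (l n : nat) (S : {set xvert l n}) :
  reflect {in S &, forall x y, x != y -> odd (hamming x y)} (is_xclique S).
Proof.
apply: (iffP forall_inP) => [cS x y xS yS | cS x xS].
  exact/implyP/(forall_inP (cS x xS)).
by apply/forall_inP => y yS; apply/implyP; apply: cS.
Qed.

Lemma F2_natr_odd (m : nat) : (m%:R = (odd m)%:R :> 'F_2)%R.
Proof. by rewrite -(Fp_nat_mod (p := 2)) // modn2. Qed.

Section HammingParityFactorization.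

Local Open Scope ring_scope.

Variables l n : nat.
Implicit Types x y : xvert l n.

Local Notation widen b := (widen_ord (leq_pred n) b).
Local Notation is_last c := ((c : 'I_n) == n.-1 :> nat).

Definition parity_lfactor x (c : option ('I_l * 'I_n.-1)) : 'F_2 :=
  if c is Some (i, b) then (x i == widen b)%:R else 1.

Definition parity_rfactor (c : option ('I_l * 'I_n.-1)) y : 'F_2 :=
  if c is Some (i, b) then (y i == widen b)%:R + (is_last (y i))%:R
  else \sum_i (is_last (y i))%:R + l.+1%:R.

(* In [a == c] = sum_(b < n) [a == b] [c == b], replace [a == n.-1] by
   1 + sum_(b < n.-1) [a == b]. *)
Lemma eq_ord_F2_expansion (a c : 'I_n) :
  \sum_(b : 'I_n.-1) (a == widen b)%:R * ((c == widen b)%:R + (is_last c)%:R)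
    + (is_last c)%:R = (a == c)%:R :> 'F_2.
Proof.
have [a_lt|a_last] := ltnP a n.-1.
- rewrite (bigD1 (Ordinal a_lt)) ?big1 //= => [|b]; last first.
    case: (a =P widen b) => [a_b|_]; last by rewrite mul0r.
    by rewrite -val_eqE /= a_b /= eqxx.
  have -> : widen (Ordinal a_lt) = a by apply: val_inj.
  by rewrite eqxx mul1r addr0 -addrA addrr_pchar2 ?addr0 1?eq_sym.
- have a_eq : a = n.-1 :> nat by have := ltn_ord a; lia.
  rewrite big1 ?add0r => [|b _]; first by rewrite -val_eqE /= a_eq eq_sym.
  case: (a =P widen b) => [a_b|_]; last by rewrite mul0r.
  by have := ltn_ord b; rewrite -[nat_of_ord b]/(nat_of_ord (widen b)) -a_b; lia.
Qed.

Lemma sum_parity_factors x y :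
  \sum_c parity_lfactor x c * parity_rfactor c y = (hamming x y).+1%:R.
Proof.
rewrite sum_option mul1r.
rewrite (eq_bigr (fun p => parity_lfactor x (Some (p.1, p.2)) *
  parity_rfactor (Some (p.1, p.2)) y)) => [|[] //].
rewrite -(pair_bigA _ (fun i b =>
  parity_lfactor x (Some (i, b)) * parity_rfactor (Some (i, b)) y)) /=.
rewrite addrC addrA -big_split /=.
under eq_bigr do rewrite eq_ord_F2_expansion.
rewrite -natr_sum -natrD F2_natr_odd [RHS]F2_natr_odd; congr (_%:R).
have card_eq : (#|[set i | x i == y i]| + hamming x y)%N = l.
  rewrite /hamming (eq_card (A := [set i | x i != y i]) (B := ~: [set i | x i == y i]));
    rewrite ?cardsC ?card_ord //.
  by move=> i; rewrite !inE.
rewrite -[\sum_i _]/(\sum_i (if x i == y i then 1 else 0))%N -big_mkcond.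
by rewrite sum1dep_card -[in l.+1]card_eq addnS /= !oddD addbA addbb.
Qed.

End HammingParityFactorization.

Lemma card_xclique_le (l n : nat) (S : {set xvert l n}) :
  is_xclique S -> #|S| <= (l * n.-1).+1.
Proof.
move/xcliqueP=> cS.
have := card_le_biorthogonal (D := S)
  (u := @parity_lfactor l n) (v := @parity_rfactor l n).
rewrite card_option card_prod !card_ord; apply=> x y xS yS.
rewrite sum_parity_factors.
have [<-|xy] := eqVneq x y; first by rewrite hamming_xx.
by rewrite F2_natr_odd /= cS.
Qed.

Lemma f_xor_le (l n : nat) : f_xor l n <= (l * n.-1).+1.
Proof. by apply/bigmax_leqP => S; apply: card_xclique_le. Qed.

Definition hdist (L : nat) (g h : nat -> nat) : nat :=
  count (fun k => g k != h k) (iota 0 L).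

Lemma hdist_xx L g : hdist L g g = 0.
Proof. by rewrite /hdist (eq_count (a2 := pred0)) ?count_pred0 // => k /[!eqxx]. Qed.

Lemma hdist_sym L g h : hdist L g h = hdist L h g.
Proof. by apply: eq_count => k; rewrite eq_sym. Qed.

Lemma f_xor_ge_card (L N : nat) (T : finType) (D : {pred T})
    (g : T -> nat -> nat) :
    (forall p k, g p k <= N) ->
    {in D &, forall p q, p != q -> odd (hdist L (g p) (g q))} ->
  #|D| <= f_xor L N.+1.
Proof.
move=> gN gD.
pose f p : xvert L N.+1 := [ffun k : 'I_L => inord (g p k)].
have hamming_f p q : hamming (f p) (f q) = hdist L (g p) (g q).
  rewrite /hamming /hdist -sum1dep_card -sum1_count -[L in iota 0 L]subn0 big_mkord.
  by apply: eq_bigl => k; rewrite !ffunE -val_eqE /= !inordK ?ltnS.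
have f_inj : {in D &, injective f}.
  move=> p q pD qD fpq; apply/eqP; apply: contraT => /(gD p q pD qD).
  by rewrite -hamming_f fpq hamming_xx.
rewrite -(card_in_imset f_inj); apply: leq_bigmax_cond.
apply/xcliqueP => _ _ /imsetP[p pD ->] /imsetP[q qD ->] fpq.
by rewrite hamming_f gD //; apply: contraNneq fpq => ->.
Qed.

Definition spike (i a k : nat) : nat := if k == i then a else odd i (+) (i < k).

Lemma spike_le N i a k : a <= N -> 0 < N -> spike i a k <= N.
Proof. by move=> aN N0; rewrite /spike; case: eqP => // _; case: (_ (+) _). Qed.

Lemma spike_self i a : spike i a i = a.
Proof. by rewrite /spike eqxx. Qed.

Lemma spike_lt i a k : k < i -> spike i a k = odd i.
Proof.
by move=> ki; rewrite /spike (_ : k == i = false) 1?(_ : i < k = false) ?addbF //; lia.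
Qed.

Lemma spike_gt i a k : i < k -> spike i a k = ~~ odd i.
Proof. by move=> ik; rewrite /spike (_ : k == i = false) ?ik ?addbT //; lia. Qed.

Lemma count_iota_const (P : pred nat) (c : bool) m r :
  (forall k, m <= k < m + r -> P k = c) -> count P (iota m r) = c * r.
Proof.
move=> Pc; rewrite (@eq_in_count _ _ (fun=> c)) => [|k]; last by rewrite mem_iota => /Pc.
by case: (c); rewrite ?count_predT ?count_pred0 ?size_iota ?mul1n.
Qed.

Lemma odd_hdist_spike_lt L i j a b : i < j < L -> odd L -> 1 < a -> 1 < b ->
  odd (hdist L (spike i a) (spike j b)).
Proof.
move=> /andP[ij jL] oddL a1 b1.
have [s Ej] : exists s, j = i + s.+1 by exists (j - i.+1); lia.
have [t EL] : exists t, L = i + (1 + (s + (1 + t))) by exists (L - (i + s.+2)); lia.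
subst j L; rewrite /hdist !iotaD !count_cat /= !add0n.
rewrite (count_iota_const (c := odd i != odd (i + s.+1))) => [|k ki]; last first.
  by rewrite !spike_lt; lia.
rewrite (count_iota_const (c := odd i == odd (i + s.+1))) => [|k ki]; last first.
  by rewrite spike_gt ?spike_lt; lia.
rewrite (count_iota_const (c := odd i != odd (i + s.+1))) => [|k ki]; last first.
  by rewrite !spike_gt; lia.
rewrite (_ : i + 1 + s = i + s.+1); last lia.
rewrite !spike_self [spike i a _]spike_gt // [spike _ b i]spike_lt //.
lia.
Qed.

Lemma odd_hdist_spike L i j a b : i < L -> j < L -> odd L -> 1 < a -> 1 < b ->
  (i, a) != (j, b) -> odd (hdist L (spike i a) (spike j b)).
Proof.
move=> iL jL oddL a1 b1 ij_ab; have [ij|ji|eij] := ltngtP i j.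
- by apply: odd_hdist_spike_lt; rewrite ?ij.
- by rewrite hdist_sym; apply: odd_hdist_spike_lt; rewrite ?ji.
- have ab : a != b by apply: contraNneq ij_ab => ->; rewrite eij.
  rewrite -eij /hdist (eq_count (a2 := pred1 i)) => [|k]; last first.
    by rewrite /spike /=; case: (k =P i) => _; rewrite ?eqxx.
  by rewrite (count_uniq_mem i (iota_uniq 0 L)) mem_iota iL.
Qed.

Lemma f_xor_ge_odd l n : odd l -> l * n <= f_xor l n.+2.
Proof.
move=> oddl.
have := @f_xor_ge_card l n.+1 _ predT (fun p : 'I_l * 'I_n => spike p.1 p.2.+2).
rewrite card_prod !card_ord; apply=> [p k|[i a] [j b] _ _ pq].
  by apply: spike_le; rewrite ?ltnS.
by apply: odd_hdist_spike.
Qed.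

Definition catf (L : nat) (g h : nat -> nat) (k : nat) : nat :=
  if k < L then g k else h (k - L).

Lemma hdist_catf L M g g' h h' :
  hdist (L + M) (catf L g h) (catf L g' h') = hdist L g g' + hdist M h h'.
Proof.
rewrite /hdist iotaD count_cat add0n -[X in iota X M]addn0 iotaDl count_map.
congr (_ + _); first by apply: eq_in_count => k; rewrite mem_iota /catf => /andP[_ ->].
by apply: eq_count => k; rewrite /catf /= ltnNge leq_addr addKn.
Qed.

Definition tick (k : nat) : nat := k == 1.

Lemma even_hdist_spike_tick i a : i < 3 -> 1 < a -> ~~ odd (hdist 3 (spike i a) tick).
Proof. by case: i => [|[|[|]]] // _ a1; rewrite /hdist /spike /tick /=; lia. Qed.

Lemma f_xor_ge_even m n : odd m -> (3 + m) * n <= (f_xor (3 + m) n.+2).+1.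
Proof.
move=> oddm; case: n => [|n]; first by rewrite muln0.
have m0 : 0 < m by case: m oddm.
(* The second-block vertex whose m-part is the padding of the first block. *)
pose z : 'I_3 * 'I_n.+1 + 'I_m * 'I_n.+1 := inr (Ordinal m0, ord0).
pose g (p : 'I_3 * 'I_n.+1 + 'I_m * 'I_n.+1) : nat -> nat := match p with
  | inl (i, a) => catf 3 (spike i a.+2) (spike 0 2)
  | inr (j, b) => catf 3 tick (spike j b.+2) end.
have gN p k : g p k <= n.+2.
  case: p => [[i a]|[j b]]; rewrite /g /catf; case: ifP => _;
    try by apply: spike_le; rewrite // ltnS ltn_ord.
  by rewrite /tick; case: (k == 1).
have cross i a j b : inr (j, b) != z ->
    odd (hdist (3 + m) (g (inl (i, a))) (g (inr (j, b)))).
  move=> jb_z; rewrite hdist_catf oddD (negbTE (even_hdist_spike_tick _ _)) //=.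
  by apply: odd_hdist_spike => //; move: jb_z; rewrite eq_sym.
have g_odd : {in predC1 z &, forall p q, p != q -> odd (hdist (3 + m) (g p) (g q))}.
  move=> [[i a]|[j b]] [[i' a']|[j' b']] pz qz pq.
  - by rewrite hdist_catf hdist_xx addn0; apply: odd_hdist_spike.
  - exact: cross.
  - by rewrite hdist_sym; apply: cross.
  - by rewrite hdist_catf hdist_xx; apply: odd_hdist_spike.
have := f_xor_ge_card gN g_odd.
by rewrite cardC1 card_sum !card_prod !card_ord; lia.
Qed.

Lemma f_xor_ge l n : 3 <= l -> l * n <= (f_xor l n.+2).+1.
Proof.
move=> l3; have [oddl|evenl] := boolP (odd l); first exact/leqW/f_xor_ge_odd.
by rewrite -(subnKC l3); apply: f_xor_ge_even; lia.
Qed.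

Unset Implicit Arguments.
Local Open Scope ring_scope.

Theorem theorem1p2 (l n : nat) (hl : (3 <= l)%N) (hn : (1 <= n)%N) :
  (l%:Z * n%:Z - 2 * l%:Z - 1 <= (f_xor l n)%:Z) /\
  ((f_xor l n)%:Z <= l%:Z * n%:Z - l%:Z + 1).
Proof.
split; last by have := f_xor_le l n; nia.
case: n hn => [|[|n]] // _; first lia.
by have := f_xor_ge n hl; nia.
Qed.
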